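(* Assume (H1), (H2) and the sequence setting (Seq), and let $x\in\mathrm{dom}\,J$ with $\partial J(x)\neq\emptyset$. Then the sequence $\big(\nabla_x S_H(x_k,t_{1,k},\dots,t_{N,k})\big)_k$ is bounded, and each of its cluster points belongs to $\partial J(x)$.
   Context: Hypothesis (H1): each $H_j:\mathbb{R}^n\to\mathbb{R}$ ($j=1,\dots,N$) is finite-valued, convex and 1-coercive (i.e. $H_j(p)/\|p\|\to+\infty$ as $\|p\|\to\infty$), and at least one $H_j$ is strictly convex. Hypothesis (H2): $J:\mathbb{R}^n\to\mathbb{R}\cup\{+\infty\}$ is proper, convex and lower semicontinuous. $J^*$ is the Legendre transform of $J$. Hopf formula: $S_H(y,t_1,\dots,t_N)=\sup_{p\in\mathbb{R}^n}\big(\langle p,y\rangle-J^*(p)-\sum_{j}t_jH_j(p)\big)$ for $t_1,\dots,t_N\ge0$; under (H1)-(H2) and $t_j>0$ for all $j$, $S_H(\cdot,t_1,\dots,t_N)$ is finite and differentiable in $y$, and $\nabla_y S_H$ is the unique maximizer in the Hopf formula. Sequence setting (Seq): $x\in\mathbb{R}^n$; for each $j\in\{1,\dots,N\}$ and $k\in\mathbb{N}$, $t_{j,k}>0$ and $v_{j,k}\in\mathbb{R}^n$, with $t_{j,k}\to0$, $v_{j,k}\to v_{j,\infty}$ and $t_{j,k}/t_{1,k}\to\alpha_{j,\infty}\in\mathbb{R}$ as $k\to\infty$; and $x_k=x+\sum_{j=1}^N t_{j,k}v_{j,k}$. *)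

From Stdlib Require Import Reals Lra Classical ClassicalEpsilon.
From Stdlib Require Fin.
Open Scope R_scope.

Definition Vec (n : nat) := Fin.t n -> R.

Fixpoint dot (n : nat) : Vec n -> Vec n -> R :=
  match n with
  | O => fun _ _ => 0
  | S m => fun p q => p Fin.F1 * q Fin.F1
                      + dot m (fun i => p (Fin.FS i)) (fun i => q (Fin.FS i))
  end.

Definition vnorm {n} (p : Vec n) : R := sqrt (dot n p p).
Definition vadd {n} (p q : Vec n) : Vec n := fun i => p i + q i.
Definition vsub {n} (p q : Vec n) : Vec n := fun i => p i - q i.
Definition vscale {n} (a : R) (p : Vec n) : Vec n := fun i => a * p i.
Definition vzero {n} : Vec n := fun _ => 0.

Fixpoint rsum (N : nat) (f : nat -> R) : R :=
  match N with O => 0 | S m => rsum m f + f m end.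
Fixpoint vsum {n} (N : nat) (f : nat -> Vec n) : Vec n :=
  match N with O => vzero | S m => vadd (vsum m f) (f m) end.

(* R ∪ {+oo}: None stands for +oo *)
Definition ERp := option R.

(* supremum of a set of reals in R ∪ {+oo}; None (+oo) if unbounded above.
   (Only applied to nonempty sets below.) *)
Definition sup_ext (E : R -> Prop) : ERp :=
  match excluded_middle_informative (bound E /\ exists r, E r) with
  | left h => Some (proj1_sig (completeness E (proj1 h) (proj2 h)))
  | right _ => None
  end.

Definition convex {n} (H : Vec n -> R) : Prop :=
  forall p q lam, 0 <= lam <= 1 ->
    H (vadd (vscale lam p) (vscale (1 - lam) q)) <= lam * H p + (1 - lam) * H q.

Definition strictly_convex {n} (H : Vec n -> R) : Prop :=
  forall p q lam, p <> q -> 0 < lam < 1 ->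
    H (vadd (vscale lam p) (vscale (1 - lam) q)) < lam * H p + (1 - lam) * H q.

(* H(p)/||p|| -> +oo as ||p|| -> +oo *)
Definition one_coercive {n} (H : Vec n -> R) : Prop :=
  forall M, exists R0, forall p, R0 <= vnorm p -> M * vnorm p <= H p.

Definition proper {n} (J : Vec n -> ERp) : Prop := exists x a, J x = Some a.

Definition convex_ext {n} (J : Vec n -> ERp) : Prop :=
  forall x y a b lam, 0 <= lam <= 1 -> J x = Some a -> J y = Some b ->
    exists c, J (vadd (vscale lam x) (vscale (1 - lam) y)) = Some c /\
              c <= lam * a + (1 - lam) * b.

Definition lt_ext (r : R) (v : ERp) : Prop :=
  match v with None => True | Some a => r < a end.

Definition lsc_ext {n} (J : Vec n -> ERp) : Prop :=
  forall x r, lt_ext r (J x) ->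
    exists d, 0 < d /\ forall y, vnorm (vsub y x) < d -> lt_ext r (J y).

Definition legendre {n} (J : Vec n -> ERp) (p : Vec n) : ERp :=
  sup_ext (fun r => exists x a, J x = Some a /\ r = dot n p x - a).

Definition hopf {n} (N : nat) (H : nat -> Vec n -> R) (J : Vec n -> ERp)
    (t : nat -> R) (y : Vec n) : ERp :=
  sup_ext (fun r => exists p w, legendre J p = Some w /\
             r = dot n p y - w - rsum N (fun j => t j * H j p)).

Definition has_gradient {n} (f : Vec n -> ERp) (y g : Vec n) : Prop :=
  exists a, f y = Some a /\
    forall eps, 0 < eps -> exists d, 0 < d /\
      forall z, vnorm (vsub z y) < d ->
        exists v, f z = Some v /\
          Rabs (v - a - dot n g (vsub z y)) <= eps * vnorm (vsub z y).

Definition in_dom {n} (J : Vec n -> ERp) (x : Vec n) : Prop := exists a, J x = Some a.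
Definition subdiff {n} (J : Vec n -> ERp) (x p : Vec n) : Prop :=
  exists a, J x = Some a /\
    forall y b, J y = Some b -> a + dot n p (vsub y x) <= b.

Definition vbounded {n} (g : nat -> Vec n) : Prop :=
  exists M, forall k, vnorm (g k) <= M.
Definition cluster_point {n} (g : nat -> Vec n) (c : Vec n) : Prop :=
  forall eps, 0 < eps -> forall K, exists k, (K <= k)%nat /\ vnorm (vsub (g k) c) < eps.
Definition vcv {n} (u : nat -> Vec n) (l : Vec n) : Prop :=
  forall eps, 0 < eps -> exists K, forall k, (K <= k)%nat -> vnorm (vsub (u k) l) < eps.

(* Write S_k for the Hopf value function with times t_{j,k}, t_k := t_{0,k} for the
   reference time (index 0 here, index 1 in the paper) and s_k := x_k - x.  Fix a
   subgradient p0 ∈ ∂J(x) and a := J(x); then J*(p0) <= <p0,x> - a.  Everything rests on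
   one estimate, valid for k large with D independent of k:
       <g_k, y - x> + <g_k, u> <= J(y) - J(x) + t_k D   for y ∈ dom J, |u| <= t_k.   (★)
   It combines three facts:
   - S_k is a supremum of affine functions, hence convex, so its gradient at x_k is a
     subgradient: <g_k, d> <= S_k(x_k + d) - S_k(x_k);
   - S_k(x_k) >= <p0,x_k> - J*(p0) - Σ_j t_{j,k} H_j(p0) >= a - O(t_k);
   - S_k(y + s) <= J(y) + O(t_k) when |s| = O(t_k): by Fenchel–Young each term of the
     supremum is at most J(y) + <p,s> - t_k H_0(p) + O(t_k), and 1-coercivity of H_0
     bounds <p,s> - t_k H_0(p) by O(t_k) uniformly in p.
   The O(t_k) bounds use t_{j,k} = O(t_k) (the ratios converge) and |s_k| = O(t_k).
   Then y = x, u = t_k g_k/|g_k| in (★) gives |g_k| <= D, and u = 0, k -> ∞ along a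
   subsequence gives a + <c, y - x> <= J(y), i.e. c ∈ ∂J(x). *)

From Stdlib Require Import Reals Lra Lia FunctionalExtensionality ClassicalEpsilon.
Open Scope R_scope.

(** * Euclidean geometry of [Vec n] *)

Lemma dot_comm : forall n (p q : Vec n), dot n p q = dot n q p.
Proof. induction n; intros; simpl; [lra|]. rewrite IHn; ring. Qed.

Lemma dot_add_r : forall n (p q r : Vec n), dot n p (vadd q r) = dot n p q + dot n p r.
Proof.
  induction n; intros; simpl; [lra|].
  unfold vadd in *. rewrite IHn; ring.
Qed.

Lemma dot_scale_r : forall n a (p q : Vec n), dot n p (vscale a q) = a * dot n p q.
Proof.
  induction n; intros; simpl; [lra|].
  unfold vscale in *. rewrite IHn; ring.
Qed.

Lemma dot_zero_r : forall n (p : Vec n), dot n p vzero = 0.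
Proof.
  induction n; intros; simpl; [lra|].
  unfold vzero in *. rewrite IHn; ring.
Qed.

Lemma dot_nonneg : forall n (p : Vec n), 0 <= dot n p p.
Proof.
  induction n; intros; simpl; [lra|].
  specialize (IHn (fun i => p (Fin.FS i))). nra.
Qed.

Lemma dot_sub_r n (p q r : Vec n) : dot n p (vsub q r) = dot n p q - dot n p r.
Proof.
  replace (vsub q r) with (vadd q (vscale (-1) r))
    by (extensionality i; unfold vsub, vadd, vscale; ring).
  rewrite dot_add_r, dot_scale_r; ring.
Qed.

Lemma dot_add_l n (p q r : Vec n) : dot n (vadd q r) p = dot n q p + dot n r p.
Proof. rewrite !(dot_comm n _ p); apply dot_add_r. Qed.

Lemma dot_scale_l n a (p q : Vec n) : dot n (vscale a q) p = a * dot n q p.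
Proof. rewrite !(dot_comm n _ p); apply dot_scale_r. Qed.

Lemma dot_sub_l n (p q r : Vec n) : dot n (vsub q r) p = dot n q p - dot n r p.
Proof. rewrite !(dot_comm n _ p); apply dot_sub_r. Qed.

Lemma vnorm_nonneg n (p : Vec n) : 0 <= vnorm p.
Proof. apply sqrt_pos. Qed.

Lemma vnorm_sq n (p : Vec n) : vnorm p * vnorm p = dot n p p.
Proof. apply sqrt_sqrt, dot_nonneg. Qed.

Lemma vnorm_zero n : vnorm (@vzero n) = 0.
Proof. unfold vnorm. rewrite dot_zero_r. apply sqrt_0. Qed.

Lemma vnorm_scale n a (p : Vec n) : vnorm (vscale a p) = Rabs a * vnorm p.
Proof.
  unfold vnorm. rewrite dot_scale_l, dot_scale_r, <- Rmult_assoc.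
  rewrite sqrt_mult by (nra || apply dot_nonneg).
  rewrite <- sqrt_Rsqr_abs. reflexivity.
Qed.

(* Cauchy–Schwarz, squared form: the quadratic l |-> |p - l q|^2 is nonnegative,
   so its discriminant is nonpositive. *)
Lemma cauchy_schwarz_sq n (p q : Vec n) : dot n p q * dot n p q <= dot n p p * dot n q q.
Proof.
  set (A := dot n p p); set (B := dot n q q); set (C := dot n p q).
  assert (Hquad : forall l, 0 <= A - 2 * l * C + l * l * B).
  { intro l. pose proof (dot_nonneg n (vsub p (vscale l q))) as Hl.
    rewrite dot_sub_l, !dot_sub_r, !dot_scale_r, !dot_scale_l, (dot_comm n q p) in Hl.
    unfold A, B, C. nra. }
  assert (HA : 0 <= A) by apply dot_nonneg.
  destruct (Req_dec B 0) as [HB0|HB0].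
  - destruct (Req_dec C 0) as [HC0|HC0]; [rewrite HC0; nra|].
    specialize (Hquad ((A + 1) / (2 * C))). rewrite HB0 in Hquad.
    replace (A - 2 * ((A + 1) / (2 * C)) * C + (A + 1) / (2 * C) * ((A + 1) / (2 * C)) * 0)
      with (-1) in Hquad by (field; auto). lra.
  - assert (HB : 0 < B) by (assert (0 <= B) by apply dot_nonneg; lra).
    specialize (Hquad (C / B)).
    replace (A - 2 * (C / B) * C + C / B * (C / B) * B) with ((A * B - C * C) / B)
      in Hquad by (field; lra).
    apply Rmult_le_compat_r with (r := B) in Hquad; [|lra].
    unfold Rdiv in Hquad. rewrite Rmult_assoc, Rinv_l in Hquad by lra. lra.
Qed.

Lemma cauchy_schwarz n (p q : Vec n) : Rabs (dot n p q) <= vnorm p * vnorm q.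
Proof.
  unfold vnorm. rewrite <- sqrt_mult by apply dot_nonneg.
  rewrite <- sqrt_Rsqr_abs. apply sqrt_le_1_alt. apply cauchy_schwarz_sq.
Qed.

Lemma dot_le_norms n (p q : Vec n) : dot n p q <= vnorm p * vnorm q.
Proof. eapply Rle_trans; [apply Rle_abs | apply cauchy_schwarz]. Qed.

Lemma vnorm_triangle n (p q : Vec n) : vnorm (vadd p q) <= vnorm p + vnorm q.
Proof.
  pose proof (vnorm_nonneg n p). pose proof (vnorm_nonneg n q).
  apply Rsqr_incr_0_var; [|lra]. unfold Rsqr.
  rewrite vnorm_sq, dot_add_l, !dot_add_r, (dot_comm n q p).
  pose proof (dot_le_norms n p q). pose proof (vnorm_sq n p). pose proof (vnorm_sq n q). nra.
Qed.

Lemma vnorm_vsum n : forall N (f : nat -> Vec n),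
  vnorm (vsum N f) <= rsum N (fun j => vnorm (f j)).
Proof.
  induction N; intros; simpl.
  - rewrite vnorm_zero; lra.
  - pose proof (vnorm_triangle n (vsum N f) (f N)). specialize (IHN f). lra.
Qed.

Lemma rsum_le N f h : (forall j, (j < N)%nat -> f j <= h j) -> rsum N f <= rsum N h.
Proof.
  induction N; intros Hf; simpl; [lra|].
  assert (rsum N f <= rsum N h) by (apply IHN; intros; apply Hf; lia).
  specialize (Hf N ltac:(lia)). lra.
Qed.

Lemma rsum_plus N f h : rsum N (fun j => f j + h j) = rsum N f + rsum N h.
Proof. induction N; simpl; [lra|]. rewrite IHN; ring. Qed.

Lemma rsum_scal N c f : rsum N (fun j => c * f j) = c * rsum N f.
Proof. induction N; simpl; [lra|]. rewrite IHN; ring. Qed.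

Lemma rsum_const N c : rsum N (fun _ => c) = INR N * c.
Proof. induction N; simpl rsum; [simpl; lra|]. rewrite IHN, S_INR; ring. Qed.

Lemma rsum_nonneg N f : (forall j, (j < N)%nat -> 0 <= f j) -> 0 <= rsum N f.
Proof.
  intros Hf. replace 0 with (rsum N (fun _ => 0)) by (rewrite rsum_const; ring).
  apply rsum_le; auto.
Qed.

Lemma rsum_ge_term N f m :
  (forall j, (j < N)%nat -> 0 <= f j) -> (m < N)%nat -> f m <= rsum N f.
Proof.
  induction N; intros Hf Hm; [lia|]. simpl.
  destruct (Nat.eq_dec m N) as [->|Hne].
  - assert (0 <= rsum N f) by (apply rsum_nonneg; intros; apply Hf; lia). lra.
  - assert (f m <= rsum N f) by (apply IHN; [intros; apply Hf; lia | lia]).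
    specialize (Hf N ltac:(lia)). lra.
Qed.
Lemma finite_uniform_bound {A : Type} N (f : nat -> A -> R) :
  (forall j, (j < N)%nat -> exists M, forall z, f j z <= M) ->
  exists M, forall j, (j < N)%nat -> forall z, f j z <= M.
Proof.
  induction N; intros Hf.
  - exists 0; intros; lia.
  - destruct IHN as [M1 HM1]; [intros; apply Hf; lia|].
    destruct (Hf N ltac:(lia)) as [M2 HM2].
    exists (Rmax M1 M2). intros j Hj z.
    destruct (Nat.eq_dec j N) as [->|Hne].
    + eapply Rle_trans; [apply HM2 | apply Rmax_r].
    + eapply Rle_trans; [apply HM1; lia | apply Rmax_l].
Qed.

Lemma eventually_forall_finite (P : nat -> nat -> Prop) N :
  (forall j, (j < N)%nat -> exists K, forall k, (K <= k)%nat -> P j k) ->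
  exists K, forall j, (j < N)%nat -> forall k, (K <= k)%nat -> P j k.
Proof.
  induction N; intros HP.
  - exists O; intros; lia.
  - destruct IHN as [K1 HK1]; [intros; apply HP; lia|].
    destruct (HP N ltac:(lia)) as [K2 HK2].
    exists (max K1 K2). intros j Hj k Hk.
    destruct (Nat.eq_dec j N) as [->|Hne]; [apply HK2 | apply HK1]; lia.
Qed.

Lemma Un_cv_eventually_le u l :
  Un_cv u l -> exists K, forall k, (K <= k)%nat -> u k <= Rabs l + 1.
Proof.
  intros Hu. destruct (Hu 1 ltac:(lra)) as [K HK]. exists K. intros k Hk.
  specialize (HK k Hk). unfold R_dist in HK.
  pose proof (Rle_abs (u k - l)). pose proof (Rle_abs l). lra.
Qed.

Lemma vcv_eventually_bounded n (u : nat -> Vec n) l :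
  vcv u l -> exists K, forall k, (K <= k)%nat -> vnorm (u k) <= vnorm l + 1.
Proof.
  intros Hu. destruct (Hu 1 ltac:(lra)) as [K HK]. exists K. intros k Hk.
  replace (u k) with (vadd (vsub (u k) l) l) by (extensionality i; unfold vadd, vsub; ring).
  pose proof (vnorm_triangle n (vsub (u k) l) l). specialize (HK k Hk). lra.
Qed.

(** * Suprema in R ∪ {+oo} *)

Lemma sup_ext_lub E s : sup_ext E = Some s -> is_lub E s.
Proof.
  unfold sup_ext. destruct excluded_middle_informative as [h|h]; [|discriminate].
  intro e; injection e as <-. destruct completeness as [s Hs]; exact Hs.
Qed.

Lemma sup_ext_ge E s r : sup_ext E = Some s -> E r -> r <= s.
Proof. intros Hs Hr. exact (proj1 (sup_ext_lub E s Hs) r Hr). Qed.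

Lemma sup_ext_le E r0 B :
  E r0 -> (forall r, E r -> r <= B) -> exists s, sup_ext E = Some s /\ s <= B.
Proof.
  intros H0 HB. unfold sup_ext. destruct excluded_middle_informative as [h|h].
  - eexists; split; [reflexivity|]. destruct completeness as [s Hs]; simpl. apply Hs; exact HB.
  - exfalso; apply h; split; [exists B; exact HB | eauto].
Qed.
(** * Convex 1-coercive Hamiltonians *)

(* A convex 1-coercive function is bounded below: it is nonnegative outside some ball
   B(0,R0), and a point p of the ball is the midpoint of a far point r and of a point q
   outside the ball, so H p >= 2 H q - H r >= - H r. *)
Lemma convex_coercive_bounded_below n (H : Vec n -> R) :
  convex H -> one_coercive H -> exists L, forall p, -L <= H p.
Proof.
  intros Hc Hco. destruct (Hco 0) as [R0 HR0].
  set (c := 3 * Rabs R0). set (r := (fun _ => c) : Vec n).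
  exists (Rabs (H r)). intro p.
  pose proof (Rle_abs (H r)). pose proof (Rle_abs (- H r)). rewrite Rabs_Ropp in *.
  destruct n as [|m].
  - replace p with r; [lra|]. extensionality i. inversion i.
  - assert (Hr : c <= vnorm r).
    { unfold vnorm. simpl.
      rewrite <- (sqrt_square c) at 1 by (unfold c; pose proof (Rabs_pos R0); lra).
      apply sqrt_le_1_alt. pose proof (dot_nonneg m (fun i : Fin.t m => r (Fin.FS i))).
      unfold r at 1 2. lra. }
    destruct (Rle_lt_dec R0 (vnorm p)) as [Hp|Hp].
    + specialize (HR0 p Hp). pose proof (Rabs_pos (H r)). lra.
    + set (q := vadd (vscale (1/2) p) (vscale (1 - 1/2) r)).
      assert (Hq : H q <= 1/2 * H p + (1 - 1/2) * H r) by (apply Hc; lra).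
      assert (Hrq : r = vadd (vscale 2 q) (vscale (-1) p)).
      { extensionality i. unfold q, vadd, vscale. field. }
      assert (Hnorm : vnorm r <= 2 * vnorm q + vnorm p).
      { rewrite Hrq at 1. eapply Rle_trans; [apply vnorm_triangle|].
        rewrite !vnorm_scale, (Rabs_right 2), (Rabs_left (-1)); lra. }
      assert (Hfar : R0 <= vnorm q).
      { pose proof (Rle_abs R0). pose proof (Rabs_pos R0). unfold c in Hr. lra. }
      specialize (HR0 q Hfar). lra.
Qed.

(* Uniform estimate from 1-coercivity: a linear perturbation of size O(s) of s H stays
   bounded by O(s), uniformly in p.  This is what makes S_H(y + s) <= J(y) + O(s). *)
Lemma coercive_linear_bound n (H : Vec n -> R) L W :
  one_coercive H -> (forall p, -L <= H p) -> 0 <= W ->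
  exists C, forall p u s, 0 < s -> vnorm u <= W * s -> dot n p u - s * H p <= s * C.
Proof.
  intros Hco HL HW. destruct (Hco W) as [R0 HR0].
  exists (Rabs R0 * W + Rabs L). intros p u s Hs Hu.
  pose proof (dot_le_norms n p u) as Hcs. pose proof (vnorm_nonneg n p) as Hp0.
  pose proof (Rabs_pos R0) as HR0pos. pose proof (Rle_abs R0) as HR0abs.
  assert (HsL : - (s * H p) <= s * Rabs L).
  { pose proof (HL p). pose proof (Rle_abs L).
    replace (- (s * H p)) with (s * - H p) by ring. apply Rmult_le_compat_l; lra. }
  assert (Hpu : vnorm p * vnorm u <= vnorm p * W * s).
  { rewrite Rmult_assoc. apply Rmult_le_compat_l; lra. }
  destruct (Rle_lt_dec R0 (vnorm p)) as [Hfar|Hnear].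
  - assert (Hcoer : s * (vnorm p * W) <= s * H p).
    { apply Rmult_le_compat_l; [lra|]. rewrite Rmult_comm. auto. }
    assert (0 <= s * (Rabs R0 * W + Rabs L)).
    { pose proof (Rabs_pos L). pose proof (Rmult_le_pos _ _ HR0pos HW).
      apply Rmult_le_pos; lra. }
    nra.
  - assert (vnorm p * W * s <= Rabs R0 * W * s).
    { apply Rmult_le_compat_r; [lra|]. apply Rmult_le_compat_r; lra. }
    nra.
Qed.
(** * Legendre transform and Hopf formula *)

Lemma fenchel_young n (J : Vec n -> ERp) p w y b :
  legendre J p = Some w -> J y = Some b -> dot n p y - b <= w.
Proof. intros Hw Hy. eapply sup_ext_ge; [exact Hw | exists y, b; auto]. Qed.

Lemma legendre_at_subgradient n (J : Vec n -> ERp) x p a :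
  J x = Some a -> (forall y b, J y = Some b -> a + dot n p (vsub y x) <= b) ->
  exists w, legendre J p = Some w /\ w <= dot n p x - a.
Proof.
  intros Hx Hp. apply sup_ext_le with (r0 := dot n p x - a); [exists x, a; auto|].
  intros r [y [b [Hy ->]]]. specialize (Hp y b Hy). rewrite dot_sub_r in Hp. lra.
Qed.

Definition weighted_ham {n} N (H : nat -> Vec n -> R) (t : nat -> R) (p : Vec n) : R :=
  rsum N (fun j => t j * H j p).

Lemma hopf_ge n N H (J : Vec n -> ERp) t z p w s :
  legendre J p = Some w -> hopf N H J t z = Some s ->
  dot n p z - w - weighted_ham N H t p <= s.
Proof. intros Hw Hs. eapply sup_ext_ge; [exact Hs | exists p, w; auto]. Qed.

Lemma hopf_le n N H (J : Vec n -> ERp) t z B p0 w0 :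
  legendre J p0 = Some w0 ->
  (forall p w, legendre J p = Some w -> dot n p z - w - weighted_ham N H t p <= B) ->
  exists s, hopf N H J t z = Some s /\ s <= B.
Proof.
  intros Hw0 HB. apply sup_ext_le with (r0 := dot n p0 z - w0 - weighted_ham N H t p0).
  - exists p0, w0; auto.
  - intros r [p [w [Hw ->]]]. apply HB; auto.
Qed.

Definition convex_where_finite {n} (S : Vec n -> ERp) : Prop :=
  forall y1 y2 l s1 s2 s, 0 <= l <= 1 -> S y1 = Some s1 -> S y2 = Some s2 ->
    S (vadd (vscale l y1) (vscale (1 - l) y2)) = Some s -> s <= l * s1 + (1 - l) * s2.

(* The Hopf formula is a supremum of affine functions of y, hence convex in y. *)
Lemma hopf_convex n N H (J : Vec n -> ERp) t : convex_where_finite (hopf N H J t).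
Proof.
  intros y1 y2 l s1 s2 s Hl H1 H2 H3. apply (proj2 (sup_ext_lub _ _ H3)).
  intros r [p [w [Hw ->]]].
  pose proof (hopf_ge n N H J t y1 p w s1 Hw H1).
  pose proof (hopf_ge n N H J t y2 p w s2 Hw H2).
  unfold weighted_ham in *. rewrite dot_add_r, !dot_scale_r. nra.
Qed.

(* The gradient of a convex function is a subgradient: <g,d> <= S(y+d) - S(y).
   Compare the first-order expansion at y + l d with the convexity bound along [y, y+d]
   and let l -> 0. *)
Lemma gradient_is_subgradient n (S : Vec n -> ERp) y g a d s1 :
  convex_where_finite S -> has_gradient S y g ->
  S y = Some a -> S (vadd y d) = Some s1 -> dot n g d <= s1 - a.
Proof.
  intros Hcv [a' [Ha' Hg]] Ha Hd. rewrite Ha in Ha'. injection Ha' as <-.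
  pose proof (vnorm_nonneg n d) as Hnd.
  apply Rle_plus_epsilon. intros eps Heps.
  destruct (Hg (eps / (vnorm d + 1))) as [del [Hdel Hz]]; [apply Rdiv_lt_0_compat; lra|].
  set (l := Rmin 1 (del / (2 * (vnorm d + 1)))).
  assert (Hl0 : 0 < l) by (apply Rmin_pos; [lra | apply Rdiv_lt_0_compat; lra]).
  assert (Hl1 : l <= 1) by apply Rmin_l.
  assert (Hldel : l * vnorm d < del).
  { assert (Hl2 : l * (2 * (vnorm d + 1)) <= del).
    { apply Rle_trans with (del / (2 * (vnorm d + 1)) * (2 * (vnorm d + 1))).
      - apply Rmult_le_compat_r; [lra | apply Rmin_r].
      - right; field; lra. }
    nra. }
  assert (Hstep : vsub (vadd y (vscale l d)) y = vscale l d).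
  { extensionality i. unfold vsub, vadd, vscale. ring. }
  assert (Hnstep : vnorm (vsub (vadd y (vscale l d)) y) = l * vnorm d).
  { rewrite Hstep, vnorm_scale, Rabs_right; lra. }
  destruct (Hz (vadd y (vscale l d))) as [sl [Hsl Hexp]]; [lra|].
  rewrite Hnstep, Hstep, dot_scale_r in Hexp.
  assert (Hconv : sl <= l * s1 + (1 - l) * a).
  { apply (Hcv (vadd y d) y l s1 a sl); [lra | auto | auto |].
    replace (vadd (vscale l (vadd y d)) (vscale (1 - l) y)) with (vadd y (vscale l d));
      [auto | extensionality i; unfold vadd, vscale; ring]. }
  assert (Hsmall : eps / (vnorm d + 1) * vnorm d <= eps).
  { apply Rle_trans with (eps / (vnorm d + 1) * (vnorm d + 1)).
    - apply Rmult_le_compat_l; [apply Rlt_le, Rdiv_lt_0_compat |]; lra.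
    - right; field; lra. }
  pose proof (Rle_abs (- (sl - a - l * dot n g d))) as Hab. rewrite Rabs_Ropp in Hab.
  apply Rmult_le_reg_l with l; [lra|]. nra.
Qed.
(** * The gradient estimate at a single time vector *)

Section HopfGradientEstimate.

Variables (n N : nat) (H : nat -> Vec n -> R) (J : Vec n -> ERp).
Hypothesis HN : (0 < N)%nat.

Variable L : R.
Hypothesis HL0 : 0 <= L.
Hypothesis HL : forall j, (j < N)%nat -> forall p, -L <= H j p.

Variables (x p0 : Vec n) (a : R).
Hypothesis Hx : J x = Some a.
Hypothesis Hp0 : forall y b, J y = Some b -> a + dot n p0 (vsub y x) <= b.

(* rho bounds the ratios t_j / t_0, sigma bounds |s0| / t_0, and C comes from the
   coercivity of H_0 (lemma [coercive_linear_bound]) *)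
Variables (rho sigma C : R).
Hypothesis HC : forall p u s, 0 < s -> vnorm u <= (sigma + 1) * s ->
  dot n p u - s * H 0%nat p <= s * C.

Lemma weighted_ham_ge t p :
  (forall j, (j < N)%nat -> 0 < t j <= rho * t 0%nat) ->
  t 0%nat * H 0%nat p - t 0%nat * (L * (INR N * rho)) <= weighted_ham N H t p.
Proof.
  intros Ht. unfold weighted_ham.
  assert (Hterm : t 0%nat * (H 0%nat p + L) <= rsum N (fun j => t j * (H j p + L))).
  { apply (rsum_ge_term N (fun j => t j * (H j p + L))); auto.
    intros j Hj. destruct (Ht j Hj). pose proof (HL j Hj p). nra. }
  assert (Htimes : rsum N t <= INR N * (rho * t 0%nat)).
  { rewrite <- rsum_const. apply rsum_le. intros j Hj. apply Ht, Hj. }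
  replace (rsum N (fun j => t j * (H j p + L)))
    with (rsum N (fun j => t j * H j p) + L * rsum N t) in Hterm
    by (rewrite <- rsum_scal, <- rsum_plus; f_equal; extensionality j; ring).
  assert (L * rsum N t <= L * (INR N * (rho * t 0%nat))) by (apply Rmult_le_compat_l; lra).
  assert (0 <= t 0%nat * L) by (apply Rmult_le_pos; [apply Rlt_le, Ht, HN | lra]).
  nra.
Qed.

Lemma weighted_ham_le t p :
  (forall j, (j < N)%nat -> 0 < t j <= rho * t 0%nat) ->
  weighted_ham N H t p <= t 0%nat * (rho * rsum N (fun j => Rabs (H j p))).
Proof.
  intros Ht. unfold weighted_ham. rewrite <- Rmult_assoc, <- rsum_scal.
  apply rsum_le. intros j Hj. destruct (Ht j Hj).
  pose proof (Rle_abs (H j p)). pose proof (Rabs_pos (H j p)).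
  apply Rle_trans with (t j * Rabs (H j p)); [apply Rmult_le_compat_l; lra|].
  apply Rmult_le_compat_r; lra.
Qed.

Lemma hopf_upper_estimate t y b s :
  (forall j, (j < N)%nat -> 0 < t j <= rho * t 0%nat) ->
  vnorm s <= (sigma + 1) * t 0%nat -> J y = Some b ->
  exists S, hopf N H J t (vadd y s) = Some S /\ S <= b + t 0%nat * (C + L * (INR N * rho)).
Proof.
  intros Ht Hs Hy.
  destruct (legendre_at_subgradient n J x p0 a Hx Hp0) as [w0 [Hw0 _]].
  apply (hopf_le n N H J t _ _ p0 w0 Hw0). intros p w Hw.
  pose proof (fenchel_young n J p w y b Hw Hy).
  pose proof (weighted_ham_ge t p Ht).
  pose proof (HC p s (t 0%nat) (proj1 (Ht 0%nat HN)) Hs).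
  rewrite dot_add_r. lra.
Qed.

Lemma hopf_gradient_estimate t s0 g :
  (forall j, (j < N)%nat -> 0 < t j <= rho * t 0%nat) ->
  vnorm s0 <= sigma * t 0%nat -> has_gradient (hopf N H J t) (vadd x s0) g ->
  forall y b u, J y = Some b -> vnorm u <= t 0%nat ->
  dot n g (vsub y x) + dot n g u <=
    b - a + t 0%nat * (C + L * (INR N * rho) + vnorm p0 * sigma
                       + rho * rsum N (fun j => Rabs (H j p0))).
Proof.
  intros Ht Hs0 Hg y b u Hy Hu.
  pose proof Hg as [S0 [HS0 _]].
  destruct (legendre_at_subgradient n J x p0 a Hx Hp0) as [w0 [Hw0 Hw0le]].
  assert (Hlower : a + dot n p0 s0 - weighted_ham N H t p0 <= S0).
  { pose proof (hopf_ge n N H J t (vadd x s0) p0 w0 S0 Hw0 HS0).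
    rewrite dot_add_r in *. lra. }
  destruct (hopf_upper_estimate t y b (vadd s0 u) Ht) as [S1 [HS1 Hupper]]; auto.
  { pose proof (vnorm_triangle n s0 u). lra. }
  assert (Hpoint : vadd y (vadd s0 u) = vadd (vadd x s0) (vadd (vsub y x) u))
    by (extensionality i; unfold vadd, vsub; ring).
  rewrite Hpoint in HS1.
  pose proof (gradient_is_subgradient n _ _ g S0 _ S1 (hopf_convex n N H J t) Hg HS0 HS1)
    as Hsub.
  rewrite dot_add_r in Hsub.
  pose proof (weighted_ham_le t p0 Ht).
  pose proof (Rle_abs (- dot n p0 s0)). pose proof (cauchy_schwarz n p0 s0).
  rewrite Rabs_Ropp in *.
  assert (vnorm p0 * vnorm s0 <= vnorm p0 * (sigma * t 0%nat))
    by (apply Rmult_le_compat_l; [apply vnorm_nonneg | lra]).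
  nra.
Qed.

End HopfGradientEstimate.

(* If eventually <g_k, u> <= tau_k D whenever |u| <= tau_k (tau_k > 0), then |g_k| <= D
   eventually (take u = tau_k g_k / |g_k|), so the sequence is bounded. *)
Lemma bounded_of_directional_bound n (g : nat -> Vec n) (tau : nat -> R) D K :
  (forall k, (K <= k)%nat -> 0 < tau k) ->
  (forall k, (K <= k)%nat -> forall u, vnorm u <= tau k -> dot n (g k) u <= tau k * D) ->
  vbounded g.
Proof.
  intros Htau Hdir.
  destruct (finite_uniform_bound K (fun k (_ : unit) => vnorm (g k))) as [M HM].
  { intros k Hk. exists (vnorm (g k)). intros; lra. }
  exists (Rmax D M). intro k.
  destruct (Compare_dec.le_lt_dec K k) as [Hk|Hk];
    [| eapply Rle_trans; [apply (HM k Hk tt) | apply Rmax_r]].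
  apply Rle_trans with D; [|apply Rmax_l].
  pose proof (vnorm_nonneg n (g k)). specialize (Htau k Hk).
  destruct (Req_dec (vnorm (g k)) 0) as [Hz|Hz].
  - rewrite Hz. specialize (Hdir k Hk vzero). rewrite vnorm_zero, dot_zero_r in Hdir.
    assert (0 <= tau k * D) by (apply Hdir; lra). nra.
  - specialize (Hdir k Hk (vscale (tau k / vnorm (g k)) (g k))).
    rewrite vnorm_scale, dot_scale_r, <- vnorm_sq, Rabs_right in Hdir
      by (apply Rle_ge, Rlt_le, Rdiv_lt_0_compat; lra).
    replace (tau k / vnorm (g k) * vnorm (g k)) with (tau k) in Hdir by (field; lra).
    replace (tau k / vnorm (g k) * (vnorm (g k) * vnorm (g k))) with (tau k * vnorm (g k))
      in Hdir by (field; lra).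
    apply Rmult_le_reg_l with (tau k); [lra | apply Hdir; lra].
Qed.

Lemma cluster_points_subgradients n (J : Vec n -> ERp) x a (g : nat -> Vec n)
    (tau : nat -> R) D K :
  J x = Some a -> Un_cv tau 0 ->
  (forall k, (K <= k)%nat -> forall y b, J y = Some b ->
     dot n (g k) (vsub y x) <= b - a + tau k * D) ->
  forall c, cluster_point g c -> subdiff J x c.
Proof.
  intros Hx Htau Hest c Hc. exists a. split; auto. intros y b Hy.
  enough (dot n c (vsub y x) <= b - a) by lra.
  apply Rle_plus_epsilon. intros eps Heps.
  pose proof (vnorm_nonneg n (vsub y x)) as Hd.
  destruct (Htau (eps / (2 * (Rabs D + 1)))) as [K2 HK2].
  { apply Rdiv_lt_0_compat; [lra|]. pose proof (Rabs_pos D); lra. }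
  destruct (Hc (eps / (2 * (vnorm (vsub y x) + 1))) ltac:(apply Rdiv_lt_0_compat; lra)
              (max K K2)) as [k [Hk Hgk]].
  specialize (Hest k ltac:(lia) y b Hy).
  specialize (HK2 k ltac:(lia)). unfold R_dist in HK2. rewrite Rminus_0_r in HK2.
  assert (Htail : tau k * D <= eps / 2).
  { pose proof (Rle_abs (tau k * D)). rewrite Rabs_mult in *.
    pose proof (Rabs_pos (tau k)). pose proof (Rabs_pos D).
    apply Rle_trans with (eps / (2 * (Rabs D + 1)) * (Rabs D + 1)); [|right; field; lra].
    nra. }
  assert (Hnear : dot n c (vsub y x) - dot n (g k) (vsub y x) <= eps / 2).
  { rewrite <- dot_sub_l.
    apply Rle_trans with (vnorm (vsub c (g k)) * vnorm (vsub y x)); [apply dot_le_norms|].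
    replace (vnorm (vsub c (g k))) with (vnorm (vsub (g k) c)).
    - apply Rle_trans with (eps / (2 * (vnorm (vsub y x) + 1)) * (vnorm (vsub y x) + 1));
        [|right; field; lra].
      pose proof (vnorm_nonneg n (vsub (g k) c)). nra.
    - replace (vsub c (g k)) with (vscale (-1) (vsub (g k) c))
        by (extensionality i; unfold vscale, vsub; ring).
      rewrite vnorm_scale, Rabs_left by lra; ring. }
  lra.
Qed.

Lemma times_eventually_dominated n N (t : nat -> nat -> R) (v : nat -> nat -> Vec n)
    (vinf : nat -> Vec n) (alpha : nat -> R) :
  (0 < N)%nat ->
  (forall j k, (j < N)%nat -> 0 < t j k) ->
  (forall j, (j < N)%nat -> vcv (v j) (vinf j)) ->
  (forall j, (j < N)%nat -> Un_cv (fun k => t j k / t 0%nat k) (alpha j)) ->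
  exists rho sigma K, 0 <= sigma /\ forall k, (K <= k)%nat ->
    (forall j, (j < N)%nat -> t j k <= rho * t 0%nat k) /\
    vnorm (vsum N (fun j => vscale (t j k) (v j k))) <= sigma * t 0%nat k.
Proof.
  intros HN Ht Hv Halpha.
  destruct (finite_uniform_bound N (fun j (_ : unit) => Rabs (alpha j) + 1)) as [rho Hrho].
  { intros j _. exists (Rabs (alpha j) + 1). intros; lra. }
  destruct (finite_uniform_bound N (fun j (_ : unit) => vnorm (vinf j) + 1)) as [V HV].
  { intros j _. exists (vnorm (vinf j) + 1). intros; lra. }
  destruct (eventually_forall_finite
              (fun j k => t j k / t 0%nat k <= rho /\ vnorm (v j k) <= V) N) as [K HK].
  { intros j Hj.
    destruct (Un_cv_eventually_le _ _ (Halpha j Hj)) as [K1 HK1].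
    destruct (vcv_eventually_bounded n _ _ (Hv j Hj)) as [K2 HK2].
    exists (max K1 K2). intros k Hk. specialize (Hrho j Hj tt). specialize (HV j Hj tt).
    split; [specialize (HK1 k ltac:(lia)) | specialize (HK2 k ltac:(lia))]; lra. }
  assert (Hrho0 : 0 <= rho)
    by (pose proof (Hrho 0%nat HN tt); pose proof (Rabs_pos (alpha 0%nat)); lra).
  assert (HV0 : 0 <= V)
    by (pose proof (HV 0%nat HN tt); pose proof (vnorm_nonneg n (vinf 0%nat)); lra).
  exists rho, (INR N * (rho * V)), K. split.
  { apply Rmult_le_pos; [apply pos_INR | apply Rmult_le_pos; auto]. }
  intros k Hk. pose proof (Ht 0%nat k HN) as Ht0.
  assert (Hratio : forall j, (j < N)%nat -> t j k <= rho * t 0%nat k).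
  { intros j Hj. destruct (HK j Hj k Hk) as [Hr _].
    replace (t j k) with (t j k / t 0%nat k * t 0%nat k) by (field; lra).
    apply Rmult_le_compat_r; lra. }
  split; auto.
  eapply Rle_trans; [apply vnorm_vsum|].
  replace (INR N * (rho * V) * t 0%nat k) with (rsum N (fun _ => rho * t 0%nat k * V))
    by (rewrite rsum_const; ring).
  apply rsum_le. intros j Hj. rewrite vnorm_scale, Rabs_right by (apply Rle_ge, Rlt_le, Ht, Hj).
  apply Rmult_le_compat; [apply Rlt_le, Ht, Hj | apply vnorm_nonneg | apply Hratio, Hj |].
  apply (HK j Hj k Hk).
Qed.

Theorem lemma3p4 (n N : nat) (H : nat -> Vec n -> R) (J : Vec n -> ERp)
  (HH : forall j, (j < N)%nat -> convex (H j) /\ one_coercive (H j))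
  (Hstrict : exists j, (j < N)%nat /\ strictly_convex (H j))
  (HJ : proper J /\ convex_ext J /\ lsc_ext J)
  (x : Vec n) (t : nat -> nat -> R) (v : nat -> nat -> Vec n)
  (vinf : nat -> Vec n) (alpha : nat -> R)
  (Ht_pos : forall j k, (j < N)%nat -> 0 < t j k)
  (Ht_cv : forall j, (j < N)%nat -> Un_cv (t j) 0)
  (Hv_cv : forall j, (j < N)%nat -> vcv (v j) (vinf j))
  (Halpha : forall j, (j < N)%nat -> Un_cv (fun k => t j k / t 0%nat k) (alpha j))
  (xk : nat -> Vec n)
  (Hxk : forall k, xk k = vadd x (vsum N (fun j => vscale (t j k) (v j k))))
  (Hdom : in_dom J x) (Hsub : exists p, subdiff J x p)
  (g : nat -> Vec n)
  (Hg : forall k, has_gradient (hopf N H J (fun j => t j k)) (xk k) (g k)) :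
  vbounded g /\ (forall c, cluster_point g c -> subdiff J x c).
Proof.
  assert (HN : (0 < N)%nat) by (destruct Hstrict as [j [Hj _]]; lia).
  destruct (finite_uniform_bound N (fun j p => - H j p)) as [M HM].
  { intros j Hj. destruct (HH j Hj) as [Hconv Hcoer].
    destruct (convex_coercive_bounded_below n (H j) Hconv Hcoer) as [L HL].
    exists L. intro p. specialize (HL p). lra. }
  assert (HL : forall j, (j < N)%nat -> forall p, - Rabs M <= H j p)
    by (intros j Hj p; specialize (HM j Hj p); pose proof (Rle_abs M); lra).
  destruct Hsub as [p0 [a [Ha Hp0]]].
  destruct (times_eventually_dominated n N t v vinf alpha HN Ht_pos Hv_cv Halpha)
    as [rho [sigma [K [Hsigma Hdom_t]]]].
  destruct (coercive_linear_bound n (H 0%nat) (Rabs M) (sigma + 1)) as [C HC];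
    [apply (HH 0%nat HN) | apply (HL 0%nat HN) | lra |].
  set (D := C + Rabs M * (INR N * rho) + vnorm p0 * sigma
            + rho * rsum N (fun j => Rabs (H j p0))).
  assert (Hest : forall k, (K <= k)%nat -> forall y b u, J y = Some b ->
            vnorm u <= t 0%nat k ->
            dot n (g k) (vsub y x) + dot n (g k) u <= b - a + t 0%nat k * D).
  { intros k Hk. destruct (Hdom_t k Hk) as [Hratio Hshift].
    apply (hopf_gradient_estimate n N H J HN (Rabs M) (Rabs_pos M) HL x p0 a Ha Hp0
             rho sigma C HC (fun j => t j k) (vsum N (fun j => vscale (t j k) (v j k))));
      [intros j Hj; split; auto | exact Hshift | rewrite <- Hxk; apply Hg]. }
  split.
  - apply (bounded_of_directional_bound n g (t 0%nat) D K);
      [intros; apply Ht_pos, HN |].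
    intros k Hk u Hu. pose proof (Hest k Hk x a u Ha Hu) as Hxu.
    rewrite dot_sub_r in Hxu. lra.
  - apply (cluster_points_subgradients n J x a g (t 0%nat) D K Ha (Ht_cv 0%nat HN)).
    intros k Hk y b Hy. pose proof (Hest k Hk y b vzero Hy) as Hy0.
    rewrite vnorm_zero, dot_zero_r in Hy0. pose proof (Ht_pos 0%nat k HN). lra.
Qed.
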